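(* There is a constant $c$ such that for every $\ell\in\mathbb N$ and every finite alphabet $\Gamma_2$ disjoint from $\Gamma_1=\{0,1,\mathsf{inc},\mathsf{dec}\}$, there are $\ell$ DFAs $A_1,\dots,A_\ell$ over $\Gamma_1\cup\Gamma_2$, each with at most $c\cdot\ell$ states, such that $L'_\ell=\bigcap_{i=1}^{\ell}L(A_i)$.
   Context: For a word $b_1b_2\cdots b_\ell\in\{0,1\}^\ell$ let $\mathsf{val}(b_1\cdots b_\ell)=\sum_i b_i 2^{\ell-i}$. Interpret $\mathsf{inc}(n)=n+1$, $\mathsf{dec}(n)=n-1$ and $a(n)=n$ for $a\in\Gamma_2$. Then $L'_\ell$ is the set of words $n_0o_1n_1o_2n_2\cdots o_kn_k$ with $k\ge 0$, each $n_i\in\{0,1\}^\ell$, each $o_i\in\{\mathsf{inc},\mathsf{dec}\}\cup\Gamma_2$, such that $\mathsf{val}(n_i)=o_i(\mathsf{val}(n_{i-1}))$ for all $0<i\le k$, $n_0=0^\ell=n_k$, if $o_i=\mathsf{inc}$ then $n_{i-1}\neq 1^\ell$, and if $o_i=\mathsf{dec}$ then $n_{i-1}\ne 0^\ell$. *)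

From mathcomp Require Import all_boot.
Set Implicit Arguments. Unset Strict Implicit. Unset Printing Implicit Defensive.

Inductive gamma1 := G0 | G1 | Ginc | Gdec.

(* The alphabet Gamma_1 \cup Gamma_2, with Gamma_2 disjoint from Gamma_1:
   modelled as the disjoint sum. *)
Definition letter (G2 : Type) := (gamma1 + G2)%type.

Record dfa (S : Type) := DFA {
  dstate : finType;
  dstart : dstate;
  dtrans : dstate -> S -> dstate;
  dfinal : pred dstate }.
Arguments dstate {S}. Arguments dstart {S}. Arguments dtrans {S}. Arguments dfinal {S}.

Definition accepts S (A : dfa S) (w : seq S) : bool :=
  dfinal A (foldl (dtrans A) (dstart A) w).

Definition bval (s : seq bool) : nat :=
  \sum_(i < size s) (nth false s i) * 2 ^ (size s - i.+1).

Definition bit_letter G2 (b : bool) : letter G2 := inl (if b then G1 else G0).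

(* the word n_0 o_1 n_1 ... o_k n_k *)
Definition encode G2 (n0 : seq bool) (ps : seq (letter G2 * seq bool)) :
    seq (letter G2) :=
  map (@bit_letter G2) n0 ++ flatten [seq p.1 :: map (@bit_letter G2) p.2 | p <- ps].

Definition is_op G2 (o : letter G2) : bool :=
  match o with inl Ginc | inl Gdec | inr _ => true | _ => false end.

Definition op_apply G2 (o : letter G2) (n : nat) : nat :=
  match o with inl Ginc => n.+1 | inl Gdec => n.-1 | _ => n end.

Definition Lprime (l : nat) G2 (w : seq (letter G2)) : Prop :=
  exists (n0 : seq bool) (ps : seq (letter G2 * seq bool)),
    let ns := n0 :: map snd ps in
    let os := map fst ps in
    [/\ w = encode n0 ps,
        all (fun n => size n == l) ns,
        all (@is_op G2) os,
        n0 = nseq l false /\ last n0 (map snd ps) = nseq l false &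
        forall i, i < size ps ->
          let o := nth (inl G0) os i in
          let prev := nth [::] ns i in
          let cur := nth [::] ns i.+1 in
          [/\ bval cur = op_apply o (bval prev),
              o = inl Ginc -> prev <> nseq l true &
              o = inl Gdec -> prev <> nseq l false]].

From mathcomp Require Import all_boot zify.
Set Implicit Arguments. Unset Strict Implicit. Unset Printing Implicit Defensive.

(* Bit [i] of the successor (predecessor) of an [l]-bit number [n] is bit [i] of [n],
   flipped exactly when all later bits of [n] are 1 (are 0), and the operation overflows
   exactly when all bits of [n] are 1 (are 0).  So the [i]-th automaton only has to remember,
   while reading a block, its position, the predicted value of bit [i], and whether the bits
   after position [i] are all 1 / all 0 so far: O(l) states.  It checks that every block has
   length [l], that bit [i] of each block is the predicted one, that bit [i] of the last block
   is 0, and (for [i = 0]) that no operation overflows.  Together the [l] automata pin down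
   every bit of every block, hence accept exactly the valid counter runs. *)

Lemma nseq_of_nth_ord T (x : T) l s :
  size s = l -> (forall i : 'I_l, nth x s i = x) -> s = nseq l x.
Proof.
move=> Esl Es; apply: (@eq_from_nth _ x) => [|j]; rewrite Esl ?size_nseq // => lt_jl.
by rewrite nth_nseq lt_jl (Es (Ordinal lt_jl)).
Qed.

Lemma bval_cons b s : bval (b :: s) = b * 2 ^ size s + bval s.
Proof. by rewrite /bval /= big_ord_recl /= subn1. Qed.

Lemma bval_ltn s : bval s < 2 ^ size s.
Proof.
elim: s => [|b s IH]; first by rewrite /bval big_ord0.
by rewrite bval_cons [size (_ :: _)]/= expnS; case: b; lia.
Qed.

Lemma bval_inj s t : size s = size t -> bval s = bval t -> s = t.
Proof.
elim: s t => [|b s IH] [|c t] //= [Est]; rewrite !bval_cons Est => E.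
have := bval_ltn s; have := bval_ltn t; rewrite Est => lt_t lt_s.
have Ebc : b = c by case: b c E => [] [] //=; lia.
by rewrite Ebc (IH t) //; move: E; rewrite Ebc; lia.
Qed.

Lemma bval_nseq_false k : bval (nseq k false) = 0.
Proof. by elim: k => [|k IH]; rewrite ?bval_cons /= ?IH // /bval big_ord0. Qed.

Lemma bval_nseq_true k : bval (nseq k true) = (2 ^ k).-1.
Proof.
elim: k => [|k IH]; first by rewrite /bval big_ord0.
by rewrite bval_cons IH size_nseq expnS; have := expn_gt0 2 k; lia.
Qed.

Lemma all_idP s : reflect (s = nseq (size s) true) (all id s).
Proof. by rewrite -(eq_all eqb_id); apply: all_pred1P. Qed.

Lemma all_negbP s : reflect (s = nseq (size s) false) (all negb s).
Proof. by rewrite -(eq_all eqbF_neg); apply: all_pred1P. Qed.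

Section CounterOperations.

Variable G2 : Type.
Implicit Types (o : letter G2) (n m : seq bool).

Definition bit_update o (x ones zeros : bool) : bool :=
  match o with
  | inl Ginc => x (+) ones
  | inl Gdec => x (+) zeros
  | _ => x
  end.

Definition op_bit o n i : bool :=
  bit_update o (nth false n i) (all id (drop i.+1 n)) (all negb (drop i.+1 n)).

Definition op_bits o n : seq bool := mkseq (op_bit o n) (size n).

Definition flag_overflow o (x ones zeros : bool) : bool :=
  match o with
  | inl Ginc => x && ones
  | inl Gdec => ~~ x && zeros
  | _ => false
  end.

Definition op_overflow o n : bool :=
  match o with
  | inl Ginc => all id n
  | inl Gdec => all negb n
  | _ => false
  end.

Lemma op_overflow_cons o b n :
  op_overflow o (b :: n) = flag_overflow o b (all id n) (all negb n).
Proof. by case: o => [[]|]. Qed.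

Lemma size_op_bits o n : size (op_bits o n) = size n.
Proof. exact: size_mkseq. Qed.

Lemma nth_op_bits o n i : i < size n -> nth false (op_bits o n) i = op_bit o n i.
Proof. exact: nth_mkseq. Qed.

Lemma op_bits_cons o b n : op_bits o (b :: n) = op_bit o (b :: n) 0 :: op_bits o n.
Proof.
apply: (@eq_from_nth _ false) => [|[|i] lt_i]; first by rewrite size_op_bits /= size_op_bits.
  by rewrite nth_op_bits.
by move: lt_i; rewrite size_op_bits => lt_i; rewrite [RHS]/= !nth_op_bits.
Qed.

Lemma op_bits_inc_ones k : op_bits (inl Ginc) (nseq k true) = nseq k false.
Proof.
apply: (@eq_from_nth _ false) => [|i]; rewrite size_op_bits ?size_nseq // => lt_i.
by rewrite nth_op_bits ?size_nseq // /op_bit /= drop_nseq !nth_nseq all_nseq lt_i orbT.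
Qed.

Lemma op_bits_dec_zeros k : op_bits (inl Gdec) (nseq k false) = nseq k true.
Proof.
apply: (@eq_from_nth _ false) => [|i]; rewrite size_op_bits ?size_nseq // => lt_i.
by rewrite nth_op_bits ?size_nseq // /op_bit /= drop_nseq !nth_nseq all_nseq lt_i orbT.
Qed.

Lemma bval_op_bits o n : ~~ op_overflow o n -> bval (op_bits o n) = op_apply o (bval n).
Proof.
case: o => [[]|g] /=; do ?by rewrite /op_bits /op_bit /= mkseq_nth.
- elim: n => [//|b n IH]; rewrite op_bits_cons !bval_cons size_op_bits /op_bit /= drop0.
  case: (boolP (all id n)) => [/all_idP En|Nn _]; last by rewrite addbF IH //; lia.
  rewrite andbT => /negbTE ->; rewrite En op_bits_inc_ones size_nseq.
  by rewrite bval_nseq_false bval_nseq_true; have := expn_gt0 2 (size n); lia.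
- elim: n => [//|b n IH]; rewrite op_bits_cons !bval_cons size_op_bits /op_bit /= drop0.
  case: (boolP (all negb n)) => [/all_negbP En|Nn]; last first.
    have pos_n : 0 < bval n.
      rewrite lt0n; apply: contraNN Nn => /eqP bval0.
      by apply/all_negbP/bval_inj; rewrite ?size_nseq ?bval_nseq_false.
    by move=> _; rewrite addbF IH //; case: b; lia.
  rewrite andbT negbK => ->; rewrite En op_bits_dec_zeros size_nseq.
  by rewrite bval_nseq_false bval_nseq_true; have := expn_gt0 2 (size n); lia.
Qed.

Definition counter_step l o prev cur : Prop :=
  [/\ bval cur = op_apply o (bval prev),
      o = inl Ginc -> prev <> nseq l true &
      o = inl Gdec -> prev <> nseq l false].

Lemma counter_stepP o n m : size m = size n ->
  counter_step (size n) o n m <-> ~~ op_overflow o n /\ m = op_bits o n.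
Proof.
move=> Emn; split=> [[Eval not_ones not_zeros] | [no_ov ->]].
  have no_ov : ~~ op_overflow o n.
    by case: o Eval not_ones not_zeros => [[]|] //= _ H1 H2; apply/negP;
      [move/all_idP; apply: H1 | move/all_negbP; apply: H2].
  by split=> //; apply: bval_inj; rewrite ?size_op_bits ?bval_op_bits.
split; first exact: bval_op_bits.
- by move=> Eo /all_idP; apply/negP; rewrite Eo in no_ov.
- by move=> Eo /all_negbP; apply/negP; rewrite Eo in no_ov.
Qed.

Fixpoint counter_trace l n (ps : seq (letter G2 * seq bool)) : bool :=
  if ps is (o, m) :: ps' then
    [&& is_op o, ~~ op_overflow o n, m == op_bits o n & counter_trace l m ps']
  else n == nseq l false.

Lemma counter_traceP l n ps : size n = l ->
  counter_trace l n ps <->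
  [/\ all (fun m => size m == l) (map snd ps), all (@is_op G2) (map fst ps),
      last n (map snd ps) = nseq l false &
      forall i, i < size ps ->
        counter_step l (nth (inl G0) (map fst ps) i)
          (nth [::] (n :: map snd ps) i) (nth [::] (n :: map snd ps) i.+1)].
Proof.
elim: ps n => [|[o m] ps IH] n Esn /=.
  by split=> [/eqP | [_ _ ->]].
split.
  case/and4P=> op_o no_ov /eqP Em /IH[]; rewrite Em size_op_bits //.
  move=> sizes ops Elast steps; rewrite Esn eqxx op_o; split=> // -[_|i /steps //].
  by rewrite -Esn counter_stepP ?size_op_bits.
case=> /andP[/eqP Esm sizes] /andP[op_o ops] Elast steps.
have [no_ov Em] : ~~ op_overflow o n /\ m = op_bits o n.
  by apply/counter_stepP; rewrite ?Esn ?Esm //; apply: (steps 0).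
rewrite op_o no_ov -Em eqxx /=; apply/IH => //.
by split=> // i; apply: (steps i.+1).
Qed.

End CounterOperations.

Lemma LprimeE l G2 (w : seq (letter G2)) : Lprime l w <->
  exists ps, w = encode (nseq l false) ps /\ counter_trace l (nseq l false) ps.
Proof.
split=> [[n0 [ps [Ew /andP[/eqP Esn0 sizes] ops [En0 Elast] steps]]] | [ps [Ew trace]]].
  by exists ps; rewrite -En0; split=> //; apply/counter_traceP.
have [sizes ops Elast steps] := (counter_traceP _ (size_nseq l false)).1 trace.
by exists (nseq l false), ps; rewrite /= size_nseq eqxx.
Qed.

Section BitTracker.

Variable G2 : Type.

Definition bit_of (a : letter G2) : option bool :=
  match a with inl G0 => Some false | inl G1 => Some true | _ => None end.
Arguments bit_of : simpl never.

Lemma bit_of_letter b : bit_of (bit_letter G2 b) = Some b.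
Proof. by case: b. Qed.

Lemma is_opE a : is_op a = (bit_of a == None).
Proof. by case: a => [[]|]. Qed.

Lemma encode_cons n o m ps :
  encode n ((o, m) :: ps) = map (@bit_letter G2) n ++ o :: encode m ps.
Proof. by []. Qed.

Lemma split_bits (w : seq (letter G2)) : exists n rest,
  w = map (@bit_letter G2) n ++ rest /\ (if rest is a :: _ then bit_of a = None else True).
Proof.
elim: w => [|a w [n [rest [-> rest_spec]]]]; first by exists [::], [::].
case Ea: (bit_of a) => [b|]; last by exists [::], (a :: map (@bit_letter G2) n ++ rest).
by exists (b :: n), rest; case: a Ea => [[]|] //= [<-].
Qed.

Variables (l : nat) (i : 'I_l).

(* [Some (p, x, ones, zeros)]: [p] bits of the current block have been read, [x] is the
   expected bit [i] of the block, and [ones]/[zeros] record whether all bits read after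
   position [i] are 1/0; [None] is the rejecting sink. *)
Definition tracker_state := option ('I_l.+1 * bool * bool * bool).

Definition tracker_start x : tracker_state := Some (ord0, x, true, true).

Definition tracker_trans (s : tracker_state) (a : letter G2) : tracker_state :=
  if s is Some (p, x, ones, zeros) then
    if bit_of a is Some b then
      if p == l :> nat then None
      else if p == i :> nat then (if b == x then Some (inord p.+1, x, true, true) else None)
      else if p < i then Some (inord p.+1, x, ones, zeros)
      else Some (inord p.+1, x, b && ones, ~~ b && zeros)
    else if (p == l :> nat) && ((i == 0 :> nat) ==> ~~ flag_overflow a x ones zeros)
    then tracker_start (bit_update a x ones zeros)
    else None
  else None.
Arguments tracker_trans : simpl never.

Definition tracker_final (s : tracker_state) : bool :=
  if s is Some (p, x, _, _) then (p == l :> nat) && ~~ x else false.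

Definition tracker_dfa : dfa (letter G2) :=
  DFA (tracker_start false) tracker_trans tracker_final.

Lemma tracker_run_dead w : foldl tracker_trans None w = None.
Proof. by elim: w. Qed.

Lemma tracker_run_bits x n :
  foldl tracker_trans (tracker_start x) (map (@bit_letter G2) n) =
  if (size n <= l) && ((i < size n) ==> (nth false n i == x))
  then Some (inord (size n), x, all id (drop i.+1 n), all negb (drop i.+1 n))
  else None.
Proof.
elim/last_ind: n => [|n b IH].
  by rewrite /= /tracker_start (_ : inord 0 = ord0) //; apply/val_inj/inordK.
rewrite map_rcons foldl_rcons IH size_rcons nth_rcons.
case: (ltngtP (size n) l) => [lt_nl|//|Enl]; last first.
  by rewrite Enl /=; case: ifP => _ //; rewrite /tracker_trans bit_of_letter inordK ?eqxx.
have step_bit ones zeros :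
    tracker_trans (Some (inord (size n), x, ones, zeros)) (bit_letter G2 b) =
    if size n == i then (if b == x then Some (inord (size n).+1, x, true, true) else None)
    else if size n < i then Some (inord (size n).+1, x, ones, zeros)
    else Some (inord (size n).+1, x, b && ones, ~~ b && zeros).
  by rewrite /tracker_trans bit_of_letter inordK ?(ltn_eqF lt_nl) // ltnW.
case: (ltngtP i (size n)) => [lt_in|lt_ni|Ein] /=.
- rewrite ltnS (ltnW lt_in); case: eqP => //= _.
  rewrite step_bit (gtn_eqF lt_in) ltnNge (ltnW lt_in) /=.
  by rewrite !drop_rcons // !all_rcons.
- rewrite step_bit (ltn_eqF lt_ni) lt_ni ltnNge lt_ni /=.
  by rewrite !drop_oversize ?size_rcons //; lia.
- by rewrite step_bit Ein eqxx ltnSn /= !drop_oversize ?size_rcons //; case: eqP.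
Qed.

Lemma tracker_final_bits x n :
  tracker_final (foldl tracker_trans (tracker_start x) (map (@bit_letter G2) n)) =
  [&& size n == l, nth false n i == x & ~~ x].
Proof.
rewrite tracker_run_bits; case: (size n =P l) => [Esn|ne_nl].
  by rewrite Esn leqnn ltn_ord /=; case: eqP => //= _; rewrite inordK ?eqxx.
case: ifP => [/andP[le_nl _]|_] //=.
by rewrite inordK ?ltnS //; move/eqP/negbTE: ne_nl => ->.
Qed.

Lemma tracker_run_block x n a rest : bit_of a = None ->
  foldl tracker_trans (tracker_start x) (map (@bit_letter G2) n ++ a :: rest) =
  if [&& size n == l, nth false n i == x & (i == 0 :> nat) ==> ~~ op_overflow a n]
  then foldl tracker_trans (tracker_start (op_bit a n i)) rest
  else None.
Proof.
move=> a_op; rewrite foldl_cat tracker_run_bits /=.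
case: (size n =P l) => [Esn|ne_nl]; last first.
  case: ifP => [/andP[le_nl _]|_]; last by rewrite tracker_run_dead.
  rewrite [tracker_trans _ a]/tracker_trans a_op inordK ?ltnS //.
  move/eqP/negbTE: ne_nl => ->.
  exact: tracker_run_dead.
rewrite Esn leqnn ltn_ord /=; case: eqP => [<-|_]; last by rewrite tracker_run_dead.
rewrite [tracker_trans _ a]/tracker_trans a_op inordK // eqxx /=.
case: (i == 0 :> nat) / eqP => [i0|_] //=.
case: n Esn => [|b n] Esn; first by move: (ltn_ord i); rewrite i0 -[l in 0 < l]Esn.
by rewrite i0 op_overflow_cons /op_bit /= drop0; case: ifP; rewrite ?tracker_run_dead.
Qed.

Lemma tracker_accepts_trace n ps : size n = l -> counter_trace l n ps ->
  tracker_final (foldl tracker_trans (tracker_start (nth false n i)) (encode n ps)).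
Proof.
elim: ps n => [|[o m] ps IH] n Esn /=.
  move=> /eqP En; rewrite /encode cats0 tracker_final_bits Esn !eqxx.
  by rewrite En nth_nseq ltn_ord.
case/and4P=> op_o no_ov /eqP Em trace.
rewrite encode_cons tracker_run_block; last by apply/eqP; rewrite -is_opE.
rewrite Esn no_ov !eqxx implybT /= -nth_op_bits ?Esn // -Em.
by apply: IH; rewrite // Em size_op_bits.
Qed.

End BitTracker.

Lemma trace_of_tracker_accepted l G2 (xs : 'I_l -> bool) (w : seq (letter G2)) : 0 < l ->
  (forall i, tracker_final (foldl (tracker_trans i) (tracker_start l (xs i)) w)) ->
  exists n ps, [/\ w = encode n ps, size n = l, forall i : 'I_l, nth false n i = xs i
                  & counter_trace l n ps].
Proof.
move=> l_gt0; pose i0 := Ordinal l_gt0.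
have [k] := ubnP (size w); elim: k w xs => // k IH w xs /ltnSE le_wk accepted.
have [n [rest [Ew rest_spec]]] := split_bits w; subst w.
case: rest rest_spec le_wk accepted => [_ | a r a_op] le_wk accepted.
  have bits_ok (i : 'I_l) : [&& size n == l, nth false n i == xs i & ~~ xs i].
    by rewrite -(tracker_final_bits G2) -[map _ n]cats0.
  have /and3P[/eqP Esn _ _] := bits_ok i0.
  have En (i : 'I_l) : nth false n i = xs i by have /and3P[_ /eqP] := bits_ok i.
  exists n, [::]; split=> //; apply/eqP/nseq_of_nth_ord => // i.
  by rewrite En; have /and3P[_ _ /negbTE] := bits_ok i.
have block_ok (i : 'I_l) :
    [&& size n == l, nth false n i == xs i & (i == 0 :> nat) ==> ~~ op_overflow a n] /\
    tracker_final (foldl (tracker_trans i) (tracker_start l (op_bit a n i)) r).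
  by move: (accepted i); rewrite tracker_run_block //; case: ifP.
have [/and3P[/eqP Esn _ /= no_ov] _] := block_ok i0.
have [|m [ps [-> Esm Em trace]]] := IH r (op_bit a n) _ (fun i => (block_ok i).2).
  by move: le_wk; rewrite size_cat /=; lia.
exists n, ((a, m) :: ps); split=> //.
  by move=> i; have [/and3P[_ /eqP -> _] _] := block_ok i.
apply/and4P; split=> //; first by rewrite is_opE a_op.
apply/eqP/(@eq_from_nth _ false) => [|j]; rewrite ?size_op_bits ?Esn ?Esm // => lt_jl.
by rewrite nth_op_bits ?Esn // (Em (Ordinal lt_jl)).
Qed.

Theorem claim4p8 :
  exists c : nat, forall l : nat, 0 < l -> forall G2 : finType,
    exists A : 'I_l -> dfa (letter G2),
      (forall i, #|dstate (A i)| <= c * l) /\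
      (forall w : seq (letter G2), Lprime l w <-> (forall i, accepts (A i) w)).
Proof.
exists 17 => l l_gt0 G2; exists (@tracker_dfa G2 l); split.
  by move=> i; rewrite /= card_option !card_prod card_ord !card_bool; lia.
move=> w; rewrite LprimeE; split=> [[ps [-> trace]] i | accepted].
  have := tracker_accepts_trace i (size_nseq l false) trace.
  by rewrite nth_nseq ltn_ord.
have [n [ps [-> Esn En trace]]] :=
  trace_of_tracker_accepted (xs := fun=> false) l_gt0 accepted.
by exists ps; rewrite -(nseq_of_nth_ord Esn En).
Qed.
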